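(* Let $q\ge 2$, $n\ge 1$, $h\in F(n,q)$ and $u\in\Pi([n])$. Then $$\kappa(h,u)=\left\lceil \log_q\big(\chi(G_{h,u})\big)\right\rceil ,$$ where $\chi(G_{h,u})$ is the chromatic number of the confusion graph $G_{h,u}$.
   Context: Let $q\ge 2$, $A=\{0,1,\dots,q-1\}$, $[n]=\{1,\dots,n\}$, and let $F(n,q)$ be the set of all maps $A^n\to A^n$ (automata networks). For $f\in F(m,q)$ and $i\in[m]$, $f_i:A^m\to A$ is the $i$-th coordinate function of $f$. The map $f^i\in F(m,q)$ is defined by $f^i(x)=(x_1,\dots,x_{i-1},f_i(x),x_{i+1},\dots,x_m)$. For $I\subseteq[m]$, $f^I\in F(m,q)$ is defined by $f^I(x)_j=f_j(x)$ if $j\in I$ and $f^I(x)_j=x_j$ otherwise. For a word $w=(w_1,\dots,w_t)$ over $[m]$, $f^w=f^{w_t}\circ\cdots\circ f^{w_1}$. $\Pi([m])$ is the set of permutations of $[m]$, written as words $w=(w_1,\dots,w_m)$ in which each element of $[m]$ occurs once; for $i\in[m]$, $w(i)$ denotes the position $j$ with $w_j=i$. $\mathrm{pr}_{[n]}:A^m\to A^n$ is the projection onto the first $n$ coordinates. For $m\ge n$, a pair $(f,w)$ with $f\in F(m,q)$, $w\in\Pi([m])$ sequentializes $h\in F(n,q)$ if $\mathrm{pr}_{[n]}\circ f^w=h\circ \mathrm{pr}_{[n]}$. For $u\in\Pi([n])$, $w\in\Pi([m])$ respects $u$ if for all $i,j\in[n]$, $u(i)<u(j)$ implies $w(i)<w(j)$.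 The cost of sequentialization $\kappa(h,u)$ is the smallest $k\ge 0$ such that there exist $f\in F(n+k,q)$ and $w\in\Pi([n+k])$ respecting $u$ such that $(f,w)$ sequentializes $h$. The confusion graph $G_{h,u}$ is the undirected graph with vertex set $A^n$ in which $x\neq x'$ are adjacent iff $h(x)\neq h(x')$ and there exists $i\in[n]$ with $h^{\{u_1,\dots,u_i\}}(x)=h^{\{u_1,\dots,u_i\}}(x')$. *)

From mathcomp Require Import all_boot all_fingroup.
Set Implicit Arguments. Unset Strict Implicit. Unset Printing Implicit Defensive.

(* Configurations x in A^n with A = {0,...,q-1} = 'I_q, coordinates indexed by 'I_n
   (coordinate i in [n] of the paper is index i-1 here). *)
Definition config (n q : nat) := {ffun 'I_n -> 'I_q}.
Definition AN (n q : nat) := config n q -> config n q.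

Definition updI n q (f : AN n q) (I : pred 'I_n) : AN n q :=
  fun x => [ffun j => if I j then f x j else x j].

Definition upd1 n q (f : AN n q) (i : 'I_n) : AN n q := updI f (pred1 i).

(* A permutation of [m] written as the word (w 0, w 1, ..., w (m-1)):
   w j is the letter at position j; the position of letter i is w^-1 i.
   f^w = f^{w_m} o ... o f^{w_1}: apply the updates in order of position. *)
Definition seq_apply m q (f : AN m q) (w : {perm 'I_m}) : AN m q :=
  fun x => foldl (fun y (j : 'I_m) => upd1 f (w j) y) x (enum 'I_m).

Definition emb n k (i : 'I_n) : 'I_(n + k) := widen_ord (leq_addr k n) i.
Definition proj n k q (x : config (n + k) q) : config n q := [ffun i => x (emb k i)].

Definition respects n k (u : {perm 'I_n}) (w : {perm 'I_(n + k)}) : Prop :=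
  forall i j : 'I_n, ((u^-1)%g i < (u^-1)%g j)%N -> (((w^-1)%g (emb k i)) < ((w^-1)%g (emb k j)))%N.

Definition sequentializes n k q (h : AN n q) (f : AN (n + k) q) (w : {perm 'I_(n + k)}) :=
  forall x : config (n + k) q, proj (seq_apply f w x) = h (proj x).

Definition seq_ok n q (h : AN n q) (u : {perm 'I_n}) (k : nat) : Prop :=
  exists (f : AN (n + k) q) (w : {perm 'I_(n + k)}), respects u w /\ sequentializes h f w.

Definition is_kappa n q (h : AN n q) (u : {perm 'I_n}) (K : nat) : Prop :=
  seq_ok h u K /\ forall k, seq_ok h u k -> (K <= k)%N.

(* Confusion graph G_{h,u}: x, x' adjacent iff x <> x', h x <> h x', and for some
   i in [n] (here i+1 with i : 'I_n), h^{u_1..u_{i+1}} x = h^{u_1..u_{i+1}} x'.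
   {u_1,...,u_{i+1}} = letters of u at positions <= i. *)
Definition prefix_set n (u : {perm 'I_n}) (i : 'I_n) : pred 'I_n :=
  fun j => ((u^-1)%g j <= i)%N.

Definition confusion n q (h : AN n q) (u : {perm 'I_n}) : rel (config n q) :=
  fun x x' => [&& x != x', h x != h x' &
     [exists i : 'I_n, updI h (prefix_set u i) x == updI h (prefix_set u i) x']].

Definition has_coloring (V : finType) (e : rel V) (k : nat) : bool :=
  [exists c : {ffun V -> 'I_k}, [forall x, forall y, e x y ==> (c x != c y)]].

Lemma has_coloring_card (V : finType) (e : rel V) (irr : irreflexive e) :
  exists k, has_coloring e k.
Proof.
exists #|V|; apply/existsP; exists [ffun x => enum_rank x].
apply/forallP=> x; apply/forallP=> y; apply/implyP=> exy.
rewrite !ffunE; apply/negP=> /eqP /enum_rank_inj exy'.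
by move: exy; rewrite exy' irr.
Qed.

Lemma confusion_irr n q (h : AN n q) (u : {perm 'I_n}) : irreflexive (confusion h u).
Proof. by move=> x; rewrite /confusion eqxx. Qed.

Definition chi_confusion n q (h : AN n q) (u : {perm 'I_n}) : nat :=
  ex_minn (has_coloring_card (confusion_irr h u)).

From mathcomp Require Import all_boot all_fingroup.
Set Implicit Arguments. Unset Strict Implicit. Unset Printing Implicit Defensive.

(* Lower bound: let (f, w) sequentialize h with k extra coordinates and pad each x with
   constant extras. The final extras form a proper colouring of G_{h,u} by A^k: if x and y
   satisfy h^{u_1..u_i} x = h^{u_1..u_i} y and end with the same extras, then, by the
   respect of u, the two runs are in the same state just after u_i is updated, so
   h x = h y.
   Upper bound: with K = ceil(log_q chi), fix a proper colouring c into A^K. Write c x into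
   the K extra coordinates first, then update the original coordinates in the order u.
   When l is updated, the colour and the already updated prefix determine h x, since two
   configurations agreeing on both with distinct images would be adjacent in G_{h,u}. *)

Section SeqRun.
Variables (m q : nat) (f : AN m q) (w : {perm 'I_m}).

Definition seq_run t (z : config m q) :=
  foldl (fun y (j : 'I_m) => upd1 f (w j) y) z (take t (enum 'I_m)).

Lemma seq_apply_run z : seq_apply f w z = seq_run m z.
Proof. by rewrite /seq_run take_oversize // size_enum_ord. Qed.

Lemma seq_runS t z (ht : t < m) : seq_run t.+1 z = upd1 f (w (Ordinal ht)) (seq_run t z).
Proof.
rewrite /seq_run (take_nth (Ordinal ht)) ?size_enum_ord // foldl_rcons.
by congr (upd1 _ (w _) _); apply: val_inj; rewrite /= nth_enum_ord.
Qed.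

Lemma seq_run_pending t z j : t <= m -> t <= (w^-1)%g j -> seq_run t z j = z j.
Proof.
elim: t => [|t IH] ht hj; first by rewrite /seq_run take0.
rewrite (seq_runS _ ht) ffunE /=; case: eqP => [wj|_]; last exact/IH/ltnW/hj/ltnW.
by move: hj; rewrite wj permK ltnn.
Qed.

Lemma seq_run_done t z j :
  t <= m -> (w^-1)%g j < t -> seq_run t z j = f (seq_run ((w^-1)%g j) z) j.
Proof.
elim: t => [|t IH] ht hj; first by rewrite /seq_run take0.
rewrite (seq_runS _ ht) ffunE /=; case: eqP => [->|wj]; first by rewrite permK.
apply: IH; first exact: ltnW.
rewrite ltn_neqAle -ltnS hj andbT; apply/eqP=> jt; apply: wj.
by rewrite -[j](permKV w); congr (w _); apply: val_inj.
Qed.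

Lemma seq_runE t z : t <= m ->
  seq_run t z = [ffun j => if (w^-1)%g j < t then seq_apply f w z j else z j].
Proof.
move=> ht; apply/ffunP=> j; rewrite ffunE seq_apply_run.
case: ltnP => hj; last exact: seq_run_pending.
by rewrite !seq_run_done // (leq_trans hj).
Qed.

Lemma seq_apply_run_eq t z z' :
  seq_run t z = seq_run t z' -> seq_apply f w z = seq_apply f w z'.
Proof.
move=> E; rewrite !seq_apply_run /seq_run take_oversize ?size_enum_ord //.
by rewrite -(cat_take_drop t (enum 'I_m)) !foldl_cat -!/(seq_run t _) E.
Qed.
End SeqRun.

Lemma card_config k q : #|config k q| = q ^ k.
Proof. by rewrite card_ffun !card_ord. Qed.

Lemma has_coloring_map (V C : finType) (e : rel V) (c : V -> C) :
  (forall x y, e x y -> c x != c y) -> has_coloring e #|C|.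
Proof.
move=> hc; apply/existsP; exists [ffun x => enum_rank (c x)].
apply/forallP=> x; apply/forallP=> y; apply/implyP=> /hc.
by apply: contraNneq; rewrite !ffunE => /enum_rank_inj ->.
Qed.

Lemma coloring_map (V C : finType) (e : rel V) k :
  has_coloring e k -> k <= #|C| ->
  exists c : V -> C, forall x y, e x y -> c x != c y.
Proof.
case/existsP=> c0 /forallP hc0 hk; exists (fun x => enum_val (widen_ord hk (c0 x))).
move=> x y /(implyP (forallP (hc0 x) y)); apply: contraNneq.
by move=> /enum_val_inj /(congr1 val) /= /val_inj ->.
Qed.

Section Chromatic.
Variables (n q : nat) (h : AN n q) (u : {perm 'I_n}).

Lemma chi_confusion_coloring : has_coloring (confusion h u) (chi_confusion h u).
Proof. by rewrite /chi_confusion; case: ex_minnP. Qed.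

Lemma chi_confusion_min k : has_coloring (confusion h u) k -> chi_confusion h u <= k.
Proof. by rewrite /chi_confusion; case: ex_minnP => m _; apply. Qed.
End Chromatic.

Lemma split_emb n k (l : 'I_n) : split (emb k l) = inl l.
Proof.
have -> : emb k l = lshift k l by exact: val_inj.
exact: (unsplitK (inl l : 'I_n + 'I_k)).
Qed.

Lemma split_rshift n k (e : 'I_k) : split (rshift n e) = inr e.
Proof. exact: (unsplitK (inr e : 'I_n + 'I_k)). Qed.

Lemma ord_addP n k (j : 'I_(n + k)) : (exists l, j = emb k l) \/ (exists e, j = rshift n e).
Proof.
rewrite -(splitK j); case: (split j) => [l|e]; [left; exists l | right; exists e] => //.
exact: val_inj.
Qed.

Lemma prefix_set_respects n k (u : {perm 'I_n}) (w : {perm 'I_(n + k)}) i l :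
  respects u w ->
  prefix_set u i l = ((w^-1)%g (emb k l) <= (w^-1)%g (emb k (u i))).
Proof.
move=> hw; rewrite /prefix_set -{1}[i](permK u).
case: (ltngtP ((u^-1)%g l) ((u^-1)%g (u i))) => [/hw/ltnW -> // | /hw | /val_inj].
  by rewrite ltnNge => /negbTE.
by move/perm_inj ->; rewrite leqnn.
Qed.

Section LowerBound.
Variables (q n k : nat) (a : 'I_q) (h : AN n q) (u : {perm 'I_n})
  (f : AN (n + k) q) (w : {perm 'I_(n + k)}).
Hypotheses (hw : respects u w) (hfw : sequentializes h f w).

Definition pad (x : config n q) : config (n + k) q :=
  [ffun j => if split j is inl l then x l else a].

Lemma seq_apply_pad x l : seq_apply f w (pad x) (emb k l) = h x l.
Proof.
have proj_pad : proj (pad x) = x by apply/ffunP=> m; rewrite !ffunE split_emb.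
by rewrite -[in RHS]proj_pad -hfw ffunE.
Qed.

Definition final_extras (x : config n q) : config k q :=
  [ffun e => seq_apply f w (pad x) (rshift n e)].

Lemma final_extras_proper x y : confusion h u x y -> final_extras x != final_extras y.
Proof.
case/and3P=> _ hxy /existsP[i /eqP hi]; apply: contraNneq hxy => hxy.
set t := ((w^-1)%g (emb k (u i))).+1.
suff /seq_apply_run_eq E : seq_run f w t (pad x) = seq_run f w t (pad y).
  by apply/eqP/ffunP=> l; rewrite -!seq_apply_pad E.
rewrite !seq_runE ?ltn_ord //; apply/ffunP=> j; rewrite !ffunE.
case: (ord_addP j) => [[l ->] | [e ->]]; rewrite ?split_emb ?split_rshift //.
  move/ffunP/(_ l): hi; rewrite !ffunE /t ltnS -prefix_set_respects //.
  by case: ifP => _; rewrite ?seq_apply_pad.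
by move/ffunP/(_ e): hxy; rewrite !ffunE; case: ifP.
Qed.

Lemma sequentializes_chi_confusion_le : chi_confusion h u <= q ^ k.
Proof.
apply: chi_confusion_min; rewrite -card_config.
exact: has_coloring_map final_extras_proper.
Qed.
End LowerBound.

Section ExtrasFirst.
Variables (n K : nat) (u : {perm 'I_n}).

Definition extras_first_letter (p : 'I_(n + K)) : 'I_(n + K) :=
  match split (cast_ord (addnC n K) p) with
  | inl e => rshift n e
  | inr l => emb K (u l)
  end.

Definition extras_first_pos (j : 'I_(n + K)) : 'I_(n + K) :=
  cast_ord (esym (addnC n K))
    (match split j with inl l => rshift K ((u^-1)%g l) | inr e => lshift n e end).

Lemma extras_first_letterK : cancel extras_first_letter extras_first_pos.
Proof.
move=> p; rewrite /extras_first_letter /extras_first_pos.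
case E: (split (cast_ord (addnC n K) p)) => [e|l].
  by rewrite split_rshift -[lshift n e]/(unsplit (inl e)) -E splitK cast_ordK.
by rewrite split_emb permK -[rshift K l]/(unsplit (inr l)) -E splitK cast_ordK.
Qed.

Definition extras_first : {perm 'I_(n + K)} := perm (can_inj extras_first_letterK).

Lemma extras_first_emb l : (extras_first^-1)%g (emb K l) = K + (u^-1)%g l :> nat.
Proof.
have <- : extras_first (cast_ord (esym (addnC n K)) (rshift K ((u^-1)%g l))) = emb K l.
  by rewrite permE /extras_first_letter cast_ordKV split_rshift permKV.
by rewrite permK.
Qed.

Lemma extras_first_rshift e : (extras_first^-1)%g (rshift n e) = e :> nat.
Proof.
have <- : extras_first (cast_ord (esym (addnC n K)) (lshift n e)) = rshift n e.
  by rewrite permE /extras_first_letter cast_ordKV (unsplitK (inl e : 'I_K + 'I_n)).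
by rewrite permK.
Qed.

Lemma extras_first_respects : respects u extras_first.
Proof. by move=> i j; rewrite !extras_first_emb ltn_add2l. Qed.
End ExtrasFirst.

Definition before n (u : {perm 'I_n}) (l : 'I_n) : pred 'I_n :=
  [pred m | (u^-1)%g m < (u^-1)%g l].

Section UpperBound.
Variables (q n K : nat) (a : 'I_q) (h : AN n q) (u : {perm 'I_n})
  (c : config n q -> config K q).
Hypothesis c_proper : forall x y, confusion h u x y -> c x != c y.

Lemma updI_before_color_inj l x y :
  updI h (before u l) x = updI h (before u l) y -> c x = c y -> h x = h y.
Proof.
move=> hxy cxy; apply/eqP; apply: contraT => hxy'.
case E: (nat_of_ord ((u^-1)%g l)) => [|i].
  have updI0 z : updI h (before u l) z = z.
    by apply/ffunP=> m; rewrite ffunE /before inE E ltn0.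
  by move: hxy'; rewrite -(updI0 x) hxy updI0 eqxx.
have lt_in : i < n by move: (ltn_ord ((u^-1)%g l)); rewrite E => /ltnW.
have : confusion h u x y.
  apply/and3P; split=> //; first by apply: contraNneq hxy' => ->.
  apply/existsP; exists (Ordinal lt_in); apply/eqP/ffunP=> m.
  by move/ffunP/(_ m): hxy; rewrite !ffunE /prefix_set /before inE E ltnS.
by move/c_proper; rewrite cxy eqxx.
Qed.

Definition extras (z : config (n + K) q) : config K q := [ffun e => z (rshift n e)].

(* The [None] branch is never taken along a run of [extras_first]. *)
Definition coloring_network : AN (n + K) q := fun z => [ffun j =>
  match split j with
  | inl l =>
      if [pick x | (updI h (before u l) x == proj z) && (c x == extras z)] is Some x
      then h x l else a
  | inr e => c (proj z) e
  end].

Let W := extras_first K u.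

Lemma coloring_network_extras z e : seq_apply coloring_network W z (rshift n e) = c (proj z) e.
Proof.
have pos_e : (W^-1)%g (rshift n e) < n + K by exact: ltn_ord.
rewrite seq_apply_run seq_run_done // ffunE split_rshift extras_first_rshift.
congr (c _ e); apply/ffunP=> l; rewrite !ffunE seq_run_pending ?extras_first_emb //.
- by rewrite ltnW // (leq_trans (ltn_ord e)) // leq_addl.
- by rewrite ltnW // (leq_trans (ltn_ord e)) // leq_addr.
Qed.

Lemma coloring_network_emb z l : seq_apply coloring_network W z (emb K l) = h (proj z) l.
Proof.
set F := coloring_network; set x := proj z.
have [p] := ubnP ((u^-1)%g l); elim: p l => // p IH l /ltnSE lt_lp.
set t := nat_of_ord ((W^-1)%g (emb K l)).
have ht : t <= n + K by exact/ltnW/ltn_ord.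
have proj_t : proj (seq_run F W t z) = updI h (before u l) x.
  apply/ffunP=> m; rewrite !ffunE seq_runE // ffunE /t !extras_first_emb ltn_add2l /=.
  by rewrite /before inE; case: ifP => // lt_ml; rewrite IH // (leq_trans lt_ml).
have extras_t : extras (seq_run F W t z) = c x.
  apply/ffunP=> e; rewrite !ffunE seq_runE // ffunE extras_first_rshift /t extras_first_emb.
  by rewrite (leq_trans (ltn_ord e)) ?leq_addr // coloring_network_extras.
rewrite seq_apply_run seq_run_done ?ltn_ord // -/t ffunE split_emb proj_t extras_t.
case: pickP => [y /andP[/eqP hy /eqP cy] | /(_ x)]; last by rewrite !eqxx.
by rewrite (updI_before_color_inj hy cy).
Qed.

Lemma coloring_network_seq : sequentializes h coloring_network W.
Proof. by move=> z; apply/ffunP=> l; rewrite ffunE coloring_network_emb. Qed.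
End UpperBound.

Theorem mainTheorem1 (q n : nat) (hq : (2 <= q)%N) (hn : (1 <= n)%N)
  (h : AN n q) (u : {perm 'I_n}) :
  is_kappa h u (up_log q (chi_confusion h u)).
Proof.
pose a : 'I_q := Ordinal (ltnW hq).
split; last first.
  move=> k [f [w [hw hfw]]]; apply: up_log_min => //.
  exact: (sequentializes_chi_confusion_le a hw hfw).
set K := up_log q _.
have [c c_proper] : exists c : config n q -> config K q,
    forall x y, confusion h u x y -> c x != c y.
  by apply: coloring_map (chi_confusion_coloring h u) _; rewrite card_config up_logP.
exists (coloring_network a h u c), (extras_first K u); split.
- exact: extras_first_respects.
- exact: coloring_network_seq.
Qed.
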